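(* For any integer $n\ge3$, with $P_n$ and $C_n$ the path and cycle of order $n$, $\gamma_{(2,2,0)}(P_n)=\gamma_{(2,2,0)}(C_n)=2\lceil n/3\rceil$.
   Context: $N(v)$ is the open neighbourhood. $\gamma_{(2,2,0)}(G)$ is the minimum of $\sum_v f(v)$ over functions $f:V(G)\to\{0,1,2\}$ such that $\sum_{u\in N(v)}f(u)\ge2$ for every $v$ with $f(v)\in\{0,1\}$. *)

From mathcomp Require Import all_boot all_order.
Set Implicit Arguments. Unset Strict Implicit. Unset Printing Implicit Defensive.

Definition path_adj (n : nat) : rel 'I_n :=
  fun i j => (i.+1 == j :> nat) || (j.+1 == i :> nat).

Definition cycle_adj (n : nat) : rel 'I_n :=
  fun i j => ((i.+1 %% n) == j :> nat) || ((j.+1 %% n) == i :> nat).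

Definition nbr_sum (T : finType) (adj : rel T) (f : T -> nat) (v : T) : nat :=
  \sum_(u in T | adj v u) f u.

Definition is_220_df (T : finType) (adj : rel T) (f : {ffun T -> 'I_3}) : bool :=
  [forall v, (f v <= 1) ==> (2 <= nbr_sum adj (fun u => nat_of_ord (f u)) v)].

Definition weight (T : finType) (f : {ffun T -> 'I_3}) : nat :=
  \sum_(v : T) nat_of_ord (f v).

(* gamma_(2,2,0)(G): minimum weight of a (2,2,0)-dominating function.
   (The function constantly 2 is always one, so the minimum is over a
   nonempty set; the default value 0 is never used for that reason.) *)
Definition gamma220 (T : finType) (adj : rel T) : nat :=
  \big[minn/weight [ffun _ : T => (ord_max : 'I_3)]]_(f : {ffun T -> 'I_3} | is_220_df adj f)
    weight f.
Arguments path_adj n : clear implicits.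
Arguments cycle_adj n : clear implicits.

From mathcomp Require Import all_boot all_order zify.
Import Order.TTheory.

(* On the cycle, a vertex of value at most 1 sees at least 2 on its two
   neighbours, so any three consecutive values sum to at least 2.  Cutting
   C_n into floor(n/3) consecutive triples, followed by a remainder that
   starts at a vertex of value 2, gives the lower bound; if no vertex has
   value 2, every value is 1 and the weight is n.  A dominating function of
   P_n dominates C_n, which has more edges, and the value 2 on the vertices
   1, 4, 7, ... (and on the last vertex when n = 1 mod 3) dominates P_n. *)

Lemma leq_nbr_sum {T : finType} {adj : rel T} {F : T -> nat} {v u : T} :
  adj v u -> F u <= nbr_sum adj F v.
Proof. by move=> vu; rewrite /nbr_sum (bigD1 u) //= leq_addr. Qed.

Lemma nbr_sum_subrel {T : finType} {adj adj' : rel T} {F : T -> nat} {v : T} :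
  subrel adj adj' -> nbr_sum adj F v <= nbr_sum adj' F v.
Proof.
move=> sub; rewrite /nbr_sum [leqLHS]big_mkcond [leqRHS]big_mkcond /=.
apply: leq_sum => u _; case vu: (adj v u); last exact: leq0n.
by rewrite (sub _ _ vu).
Qed.

Lemma is_220_df_subrel {T : finType} {adj adj' : rel T} {f : {ffun T -> 'I_3}} :
  subrel adj adj' -> is_220_df adj f -> is_220_df adj' f.
Proof.
move=> sub /forallP df; apply/forallP => v; apply/implyP => fv.
move/implyP: (df v) => /(_ fv) /leq_trans; apply; exact: nbr_sum_subrel.
Qed.

Lemma is_220_df_const2 (T : finType) (adj : rel T) :
  is_220_df adj [ffun _ : T => (ord_max : 'I_3)].
Proof. by apply/forallP => v; rewrite ffunE. Qed.

Lemma gamma220_le (T : finType) (adj : rel T) (f : {ffun T -> 'I_3}) :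
  is_220_df adj f -> gamma220 adj <= weight f.
Proof.
move=> df; rewrite /gamma220 -minEnat.
exact: (bigmin_le_cond _ (@weight T) df).
Qed.

Lemma gamma220_ge (T : finType) (adj : rel T) (m : nat) :
  (forall f, is_220_df adj f -> m <= weight f) -> m <= gamma220 adj.
Proof.
move=> lb; apply: (big_ind (leq m)) => [|x y|//]; last by rewrite leq_min => ->.
exact/lb/is_220_df_const2.
Qed.

Lemma gamma220_eq (T : finType) (adj : rel T) (f : {ffun T -> 'I_3}) :
  is_220_df adj f -> (forall f', is_220_df adj f' -> weight f <= weight f') ->
  gamma220 adj = weight f.
Proof.
move=> df opt; apply/eqP; rewrite eqn_leq gamma220_le //.
exact: gamma220_ge.
Qed.

Lemma sum_triples_ge (g : nat -> nat) (s k : nat) :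
  (forall i, 2 <= g i + g i.+1 + g i.+2) ->
  2 * k <= \sum_(s <= i < s + 3 * k) g i.
Proof.
move=> triple; elim: k s => [|k IHk] s; first exact: leq0n.
rewrite (@big_cat_nat _ _ _ (s + 3)) ?leq_addr ?leq_add2l ?leq_pmulr //=.
have -> : \sum_(s <= i < s + 3) g i = g s + g s.+1 + g s.+2.
  by rewrite addn3 !big_nat_recr ?big_geq //; exact: leqW.
have -> : s + 3 * k.+1 = s + 3 + 3 * k by lia.
have := triple s; have := IHk (s + 3); lia.
Qed.

Lemma sum_periodic (g : nat -> nat) (n s : nat) :
  (forall i, g (i + n) = g i) ->
  \sum_(s <= i < s + n) g i = \sum_(0 <= i < n) g i.
Proof.
move=> per; elim: s => [|s IHs] //; rewrite -IHs.
have split_head :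
    \sum_(s <= i < s.+1 + n) g i = g s + \sum_(s.+1 <= i < s.+1 + n) g i.
  by rewrite big_ltn // addSn ltnS leq_addr.
have split_tail :
    \sum_(s <= i < s.+1 + n) g i = \sum_(s <= i < s + n) g i + g (s + n).
  by rewrite addSn big_nat_recr // leq_addr.
by have := per s; lia.
Qed.

Lemma sum_periodic_ge_with_two (g : nat -> nat) (n v : nat) :
  0 < n %% 3 -> (forall i, g (i + n) = g i) ->
  (forall i, 2 <= g i + g i.+1 + g i.+2) -> g v = 2 ->
  2 * ((n + 2) %/ 3) <= \sum_(0 <= i < n) g i.
Proof.
move=> r_gt0 per triple gv.
set k := n %/ 3; set r := n %% 3.
have n_eq : n = 3 * k + r by rewrite /k /r mulnC -divn_eq.
rewrite -(sum_periodic g n (v + r) per).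
rewrite (@big_cat_nat _ _ _ (v + r + 3 * k)) ?leq_addr //=; last first.
  by rewrite leq_add2l n_eq leq_addr.
have head := sum_triples_ge g (v + r) k triple.
have tail : 2 <= \sum_(v + r + 3 * k <= i < v + r + n) g i.
  have -> : v + r + 3 * k = v + n by lia.
  by rewrite big_ltn ?per ?gv ?leq_addr //; lia.
have : (n + 2) %/ 3 = k.+1 by rewrite /k; lia.
lia.
Qed.

Lemma periodic_sum_ge (g : nat -> nat) (n : nat) :
  2 < n -> (forall i, g (i %% n) = g i) -> (forall i, g i <= 2) ->
  (forall i, g i.+1 <= 1 -> 2 <= g i + g i.+2) ->
  2 * ((n + 2) %/ 3) <= \sum_(0 <= i < n) g i.
Proof.
move=> n_gt2 g_mod g_le2 g_dom; have n_gt0 : 0 < n by lia.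
have per i : g (i + n) = g i by rewrite -g_mod modnDr g_mod.
have triple i : 2 <= g i + g i.+1 + g i.+2.
  by case: (leqP (g i.+1) 1) => [/g_dom|]; lia.
have [r0|r_gt0] := posnP (n %% 3).
  have n_eq : 3 * (n %/ 3) = n by rewrite mulnC {2}(divn_eq n 3) r0 addn0.
  by have := sum_triples_ge g 0 (n %/ 3) triple; rewrite add0n n_eq; lia.
have [/existsP [v /eqP gv]|/existsPn no_two] :=
  boolP [exists v : 'I_n, g v == 2].
  exact: sum_periodic_ge_with_two per triple gv.
have g_le1 i : g i <= 1.
  have := no_two (Ordinal (ltn_pmod i n_gt0)); rewrite /= g_mod.
  by have := g_le2 i; lia.
have g1 i : g i = 1.
  by have := g_dom i (g_le1 i.+1); have := g_le1 i; have := g_le1 i.+2; lia.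
rewrite (eq_bigr (fun=> 1)) // sum_nat_const_nat; lia.
Qed.

Section CycleIndexing.

Variables (n : nat) (n_gt0 : 0 < n).

Definition ordmod (i : nat) : 'I_n := Ordinal (ltn_pmod i n_gt0).

Lemma ordmod_mod (i : nat) : ordmod (i %% n) = ordmod i.
Proof. by apply: val_inj; rewrite /= modn_mod. Qed.

Lemma ordmod_ord (v : 'I_n) : ordmod v = v.
Proof. by apply: val_inj; rewrite /= modn_small. Qed.

Lemma cycle_adj_ordmodS (i : nat) (u : 'I_n) :
  cycle_adj n (ordmod i.+1) u = (u == ordmod i.+2) || (u == ordmod i).
Proof.
rewrite /cycle_adj -!val_eqE /= -addn1 modnDml addn1 eq_sym; congr (_ || _).
by rewrite -(addn1 u) -(addn1 i) eqn_modDr modn_small.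
Qed.

Lemma nbr_sum_cycle_ordmodS (F : 'I_n -> nat) (i : nat) : 2 < n ->
  nbr_sum (cycle_adj n) F (ordmod i.+1) = F (ordmod i.+2) + F (ordmod i).
Proof.
move=> n_gt2; have neq : ordmod i.+2 != ordmod i.
  rewrite -val_eqE /= -addn2 -[X in _ != X %% n]addn0 eqn_modDl mod0n.
  by rewrite modn_small.
rewrite /nbr_sum (bigD1 (ordmod i.+2)) ?cycle_adj_ordmodS ?eqxx //=.
congr (_ + _).
apply: big_pred1 => u /=; rewrite cycle_adj_ordmodS.
by case: eqVneq => [->|]; rewrite ?(negbTE neq) ?andbT.
Qed.

End CycleIndexing.

Arguments ordmod {n} n_gt0 i.

Lemma cycle_df_weight_ge (n : nat) (f : {ffun 'I_n -> 'I_3}) :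
  2 < n -> is_220_df (cycle_adj n) f -> 2 * ((n + 2) %/ 3) <= weight f.
Proof.
move=> n_gt2 /forallP df; have n_gt0 : 0 < n by lia.
pose g i := nat_of_ord (f (ordmod n_gt0 i)).
have -> : weight f = \sum_(0 <= i < n) g i.
  by rewrite big_mkord; apply: eq_bigr => v _; rewrite /g ordmod_ord.
apply: periodic_sum_ge => // [i|i|i].
- by rewrite /g ordmod_mod.
- by rewrite -ltnS ltn_ord.
- move/implyP: (df (ordmod n_gt0 i.+1)).
  by rewrite nbr_sum_cycle_ordmodS // addnC.

Qed.

Definition path_df_two (n i : nat) : bool :=
  (i %% 3 == 1) || (i.+1 == n) && (i %% 3 == 0).

Definition path_df (n : nat) : {ffun 'I_n -> 'I_3} :=
  [ffun i : 'I_n => if path_df_two n i then ord_max else ord0].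

Lemma path_dfE (n : nat) (i : 'I_n) : path_df n i = 2 * path_df_two n i :> nat.
Proof. by rewrite ffunE; case: path_df_two. Qed.

Lemma sum_mod3_eq1 (m : nat) : \sum_(i < m) (i %% 3 == 1) = (m + 1) %/ 3.
Proof.
elim: m => [|m IHm]; first by rewrite big_ord0.
by rewrite big_ord_recr /= IHm; case: eqP; lia.
Qed.

Lemma weight_path_df (n : nat) : weight (path_df n) = 2 * ((n + 2) %/ 3).
Proof.
rewrite /weight (eq_bigr (fun i : 'I_n => 2 * path_df_two n i)) => [|i _];
  last exact: path_dfE.
rewrite -big_distrr /=; congr (2 * _).
case: n => [|m]; first by rewrite big_ord0.
rewrite big_ord_recr /= (eq_bigr (fun i : 'I_m => nat_of_bool (i %% 3 == 1))).
  by rewrite sum_mod3_eq1 /path_df_two eqxx andTb; case: eqP; case: eqP; lia.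
by move=> i _; rewrite /path_df_two /= eqSS (ltn_eqF (ltn_ord i)) orbF.
Qed.

Lemma path_df_is_220_df (n : nat) : is_220_df (path_adj n) (path_df n).
Proof.
apply/forallP => v; apply/implyP; rewrite path_dfE /path_df_two.
case: (v %% 3 =P 1) => //= v_ne1.
case: (v %% 3 =P 0) => [v_eq0 last_ne|v_ne0 _].
- have vS_lt : v.+1 < n.
    by case: (v.+1 =P n) last_ne => [//|vS_ne _]; have := ltn_ord v; lia.
  have adj_next : path_adj n v (Ordinal vS_lt) by rewrite /path_adj /= eqxx.
  apply: leq_trans (leq_nbr_sum adj_next).
  rewrite path_dfE /path_df_two /=; case: (_ =P 1) => //; lia.
- have v_gt0 : 0 < v by case: (nat_of_ord v) v_ne0.
  have vP_lt : v.-1 < n by rewrite (leq_ltn_trans (leq_pred v)).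
  have adj_prev : path_adj n v (Ordinal vP_lt).
    by rewrite /path_adj /= prednK // eqxx orbT.
  apply: leq_trans (leq_nbr_sum adj_prev).
  rewrite path_dfE /path_df_two /=; case: (_ =P 1) => //; lia.
Qed.

Lemma path_adj_sub_cycle_adj (n : nat) : subrel (path_adj n) (cycle_adj n).
Proof.
move=> i j; rewrite /path_adj /cycle_adj => /orP[/eqP ij | /eqP ji]; apply/orP.
  by left; rewrite modn_small ij.
by right; rewrite modn_small ji.
Qed.

Theorem proposition35 (n : nat) :
  3 <= n ->
  gamma220 (path_adj n) = 2 * ((n + 2) %/ 3) /\
  gamma220 (cycle_adj n) = 2 * ((n + 2) %/ 3).
Proof.
move=> n_ge3; have path_sub := path_adj_sub_cycle_adj n.
have path_lb f : is_220_df (path_adj n) f -> weight (path_df n) <= weight f.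
  move/(is_220_df_subrel path_sub)/cycle_df_weight_ge.
  by rewrite weight_path_df; apply.
have cycle_lb f : is_220_df (cycle_adj n) f -> weight (path_df n) <= weight f.
  by move/cycle_df_weight_ge; rewrite weight_path_df; apply.
rewrite -(weight_path_df n); split; apply: gamma220_eq => //.
- exact: path_df_is_220_df.
- exact: is_220_df_subrel path_sub (path_df_is_220_df n).
Qed.
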